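(* Let $(\mathbf S,+,0,\mathscr F)$ be a semilattice with operators. (1) An ideal $I$ of $\mathbf S$ is the $0$-class of some congruence relation if and only if $f(I)\subseteq I$ for every $f\in\mathscr F$. (2) If the ideal $I$ is $\mathscr F$-closed, then the least congruence with $0$-class $I$ is $\eta(I)$, the semilattice congruence generated by $I$ (i.e., by collapsing $I$ to $0$), and it is characterized by: $x\,\eta(I)\,y$ iff $x+i=y+i$ for some $i\in I$. (3) If the ideal $I$ is $\mathscr F$-closed, there is also a greatest congruence $\tau(I)$ with $0$-class $I$, given by: $x\,\tau(I)\,y$ iff for every $h\in\mathscr F^\dagger$, $h(x)\in I\Leftrightarrow h(y)\in I$, where $\mathscr F^\dagger$ is the monoid of maps generated by $\mathscr F$ (including the identity).
   Context: A semilattice with operators $(\mathbf S,+,0,\mathscr F)$ is a join semilattice $(S,+)$ with least element $0$ together with a set $\mathscr F$ of unary maps $S\to S$ each preserving $+$ and $0$. Congruences are equivalence relations compatible with $+$ and every $f\in\mathscr F$. An ideal is a nonempty down-set closed under $+$. *)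

(* the semilattice is a join-semilattice with bottom
   (bJoinSemilatticeType); + is the join `|`, 0 is \bot. *)
From HB Require Import structures.
From mathcomp Require Import all_boot all_order.
Set Implicit Arguments. Unset Strict Implicit. Unset Printing Implicit Defensive.
Import Order.TTheory.
Local Open Scope order_scope.

Section SLO.
Context {d : Order.disp_t} {S : bJoinSemilatticeType d}.

Definition operators (F : (S -> S) -> Prop) : Prop :=
  forall f, F f -> (forall x y, f (x `|` y) = f x `|` f y) /\ f \bot = \bot.

Definition ideal (I : S -> Prop) : Prop :=
  (exists x, I x) /\
  (forall x y, x <= y -> I y -> I x) /\
  (forall x y, I x -> I y -> I (x `|` y)).

Definition F_closed (F : (S -> S) -> Prop) (I : S -> Prop) : Prop :=
  forall f, F f -> forall x, I x -> I (f x).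

Definition equivalence (R : S -> S -> Prop) : Prop :=
  (forall x, R x x) /\ (forall x y, R x y -> R y x) /\
  (forall x y z, R x y -> R y z -> R x z).

Definition sl_congruence (R : S -> S -> Prop) : Prop :=
  equivalence R /\
  (forall x y x' y', R x y -> R x' y' -> R (x `|` x') (y `|` y')).

Definition congruence (F : (S -> S) -> Prop) (R : S -> S -> Prop) : Prop :=
  sl_congruence R /\ (forall f, F f -> forall x y, R x y -> R (f x) (f y)).

Definition zero_class (R : S -> S -> Prop) (I : S -> Prop) : Prop :=
  forall x, R x \bot <-> I x.

Definition etaI (I : S -> Prop) (x y : S) : Prop :=
  forall R, sl_congruence R -> (forall i, I i -> R i \bot) -> R x y.

Inductive Fdag (F : (S -> S) -> Prop) : (S -> S) -> Prop :=
  | Fdag_id : Fdag F id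
  | Fdag_comp f h : F f -> Fdag F h -> Fdag F (f \o h).

Definition tauI (F : (S -> S) -> Prop) (I : S -> Prop) (x y : S) : Prop :=
  forall h, Fdag F h -> (I (h x) <-> I (h y)).

End SLO.

(* Operators fix 0, so the 0-class of any congruence is F-closed.  For an
   F-closed ideal I, the relation "x + i = y + i for some i in I" is a
   semilattice congruence (I is directed), which operators respect because
   they preserve joins and map I into I; it is generated by the pairs (i, 0),
   hence it is the least congruence with 0-class I.  At the other end, a
   congruence with 0-class I can only relate x and y if h(x) and h(y) lie
   together in or out of I for every h in the monoid F^dagger; this relation
   respects joins since h(x + x') lies in the ideal I iff h(x) and h(x') do. *)
From HB Require Import structures.
From mathcomp Require Import all_boot all_order.
Import Order.TTheory.
Local Open Scope order_scope.

Section SemilatticeWithOperators.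
Context {d : Order.disp_t} {S : bJoinSemilatticeType d}.
Implicit Types (I : S -> Prop) (R : S -> S -> Prop) (h : S -> S).

Lemma ideal_bot I : ideal I -> I \bot.
Proof. by move=> [[i Ii] [downI _]]; apply: downI Ii; apply: le0x. Qed.

Lemma ideal_join I x y : ideal I -> I (x `|` y) <-> I x /\ I y.
Proof.
move=> [_ [downI joinI]]; split; last by move=> [Ix Iy]; apply: joinI.
by move=> Ixy; split; apply: downI Ixy; [apply: leUl | apply: leUr].
Qed.

Definition join_collapse I x y := exists i, I i /\ x `|` i = y `|` i.

Lemma sl_congruence_join_collapse I :
  (exists i, I i) -> (forall i j, I i -> I j -> I (i `|` j)) ->
  sl_congruence (join_collapse I).
Proof.
move=> [i0 Ii0] joinI; split; first split.
- by move=> x; exists i0.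
- split; first by move=> x y [i [Ii e]]; exists i.
  move=> x y z [i [Ii exy]] [j [Ij eyz]]; exists (i `|` j); split; first exact: joinI.
  by rewrite joinA exy -joinA (joinC i j) joinA eyz -joinA (joinC j i).
move=> x y x' y' [i [Ii e]] [j [Ij e']]; exists (i `|` j); split; first exact: joinI.
by rewrite joinACA e e' joinACA.
Qed.

Lemma join_collapse_zero_class I : ideal I -> zero_class (join_collapse I) I.
Proof.
move=> [_ [downI _]] x; split; last by move=> Ix; exists x; rewrite joinxx join0x.
by move=> [i [Ii e]]; apply: downI Ii; rewrite join0x in e; rewrite -e leUl.
Qed.

Lemma etaI_least I R : sl_congruence R -> (forall i, I i -> R i \bot) ->
  forall x y, etaI I x y -> R x y.
Proof. by move=> congR RI x y; apply. Qed.

Lemma etaIP I : ideal I -> forall x y, etaI I x y <-> join_collapse I x y.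
Proof.
move=> idealI x y; have [[i0 Ii0] [_ joinI]] := idealI; split.
  apply; first exact: sl_congruence_join_collapse I (ex_intro _ i0 Ii0) joinI.
  by move=> i Ii; exists i; rewrite joinxx join0x.
move=> [i [Ii e]] R [[reflR [symR transR]] joinR] RI.
have Rx : R x (x `|` i) by rewrite -{1}(joinx0 x); apply: joinR; last apply: symR; auto.
have Ry : R (y `|` i) y by rewrite -{2}(joinx0 y); apply: joinR; auto.
by apply: transR Rx _; rewrite e.
Qed.

Variable F : (S -> S) -> Prop.
Hypothesis HF : operators F.

Lemma Fdag_morph h : Fdag F h -> (forall x y, h (x `|` y) = h x `|` h y) /\ h \bot = \bot.
Proof.
elim=> [|f g Ff _ [hD h0]] //; have [fD f0] := HF _ Ff.
by split=> [x y|] /=; rewrite ?hD ?h0 ?fD ?f0.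
Qed.

Lemma Fdag_compose h g : Fdag F h -> Fdag F g -> Fdag F (h \o g).
Proof. by move=> Fh Fg; elim: Fh => [|f k Ff _ IH] //; exact: Fdag_comp Ff IH. Qed.

Lemma Fdag_F_closed I : F_closed F I -> forall h, Fdag F h -> forall x, I x -> I (h x).
Proof. by move=> closedI h; elim=> [|f k Ff _ IH] // x Ix; apply: closedI (IH _ Ix). Qed.

Lemma congruence_Fdag R h : congruence F R -> Fdag F h ->
  forall x y, R x y -> R (h x) (h y).
Proof. by move=> [_ RF]; elim=> [|f k Ff _ IH] // x y /IH; apply: RF. Qed.

Lemma zero_class_F_closed R I : congruence F R -> zero_class R I -> F_closed F I.
Proof.
move=> congR zeroR f Ff x /zeroR Rx0; apply/zeroR.
by rewrite -(proj2 (HF _ Ff)); apply: (proj2 congR).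
Qed.

Lemma etaI_congruence I : ideal I -> F_closed F I -> congruence F (etaI I).
Proof.
move=> idealI closedI; have etaE := etaIP I idealI; have [_ [_ joinI]] := idealI.
have [[reflE [symE transE]] joinE] :=
  sl_congruence_join_collapse I (proj1 idealI) joinI.
split; first split; first split.
- by move=> x; apply/etaE; apply: reflE.
- split; first by move=> x y /etaE xy; apply/etaE; apply: symE.
  by move=> x y z /etaE xy /etaE yz; apply/etaE; apply: transE yz.
- by move=> x y x' y' /etaE xy /etaE xy'; apply/etaE; apply: joinE.
move=> f Ff x y /etaE [i [Ii e]]; apply/etaE.
by exists (f i); split; [apply: closedI | rewrite -!(proj1 (HF _ Ff)) e].
Qed.

Lemma etaI_zero_class I : ideal I -> zero_class (etaI I) I.
Proof.
move=> idealI x; have collapseE := join_collapse_zero_class I idealI x.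
by split=> [/(etaIP I idealI)/collapseE | /collapseE/(etaIP I idealI)].
Qed.

Lemma tauI_congruence I : ideal I -> congruence F (tauI F I).
Proof.
move=> idealI; split; first split; first split.
- by [].
- split; first by move=> x y xy h Fh; split=> /(xy h Fh).
  move=> x y z xy yz h Fh.
  by split=> [/(xy h Fh)/(yz h Fh) | /(yz h Fh)/(xy h Fh)].
- move=> x y x' y' xy xy' h Fh; have joinIE := ideal_join _ _ _ idealI.
  rewrite !(proj1 (Fdag_morph _ Fh)).
  have [hxy hxy'] := (xy h Fh, xy' h Fh).
  by split=> /joinIE [hx hx']; apply/joinIE; split;
    [apply/hxy | apply/hxy' | apply/hxy | apply/hxy'].
move=> f Ff x y xy h Fh.
exact: xy (h \o f) (Fdag_compose _ _ Fh (Fdag_comp Ff (Fdag_id F))).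
Qed.

Lemma tauI_zero_class I : ideal I -> F_closed F I -> zero_class (tauI F I) I.
Proof.
move=> idealI closedI x; split.
  by move=> /(_ id (Fdag_id F)) /= [_]; apply; apply: ideal_bot.
move=> Ix h Fh; rewrite (proj2 (Fdag_morph _ Fh)).
by split=> _; [apply: ideal_bot | apply: Fdag_F_closed _ closedI h Fh x Ix].
Qed.

Lemma tauI_greatest R I : congruence F R -> zero_class R I ->
  forall x y, R x y -> tauI F I x y.
Proof.
move=> congR zeroR x y xy h Fh; have [[[_ [symR transR]] _] _] := congR.
have hxy := congruence_Fdag _ _ congR Fh _ _ xy.
by split=> /zeroR h0; apply/zeroR; [apply: transR (symR _ _ hxy) h0 | apply: transR hxy h0].
Qed.

End SemilatticeWithOperators.

Theorem theorem5p1 (d : Order.disp_t) (S : bJoinSemilatticeType d)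
  (F : (S -> S) -> Prop) (HF : operators F) :
  (* (1) *)
  (forall I : S -> Prop, ideal I ->
     ((exists R, congruence F R /\ zero_class R I) <-> F_closed F I)) /\
  (* (2) *)
  (forall I : S -> Prop, ideal I -> F_closed F I ->
     congruence F (etaI I) /\ zero_class (etaI I) I /\
     (forall R, congruence F R -> zero_class R I ->
        forall x y, etaI I x y -> R x y) /\
     (forall x y, etaI I x y <-> exists i, I i /\ x `|` i = y `|` i)) /\
  (* (3) *)
  (forall I : S -> Prop, ideal I -> F_closed F I ->
     congruence F (tauI F I) /\ zero_class (tauI F I) I /\
     (forall R, congruence F R -> zero_class R I ->
        forall x y, R x y -> tauI F I x y)).
Proof.
split; [|split].
- move=> I idealI; split.
    by move=> [R [congR zeroR]]; apply: zero_class_F_closed congR zeroR.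
  move=> closedI; exists (etaI I).
  by split; [apply: etaI_congruence | apply: etaI_zero_class].
- move=> I idealI closedI; split; [|split; [|split]].
  + exact: etaI_congruence.
  + exact: etaI_zero_class.
  + move=> R [congR _] zeroR; apply: etaI_least congR _ => i Ii; exact/zeroR.
  + exact: etaIP.
- move=> I idealI closedI; split; [|split].
  + exact: tauI_congruence.
  + exact: tauI_zero_class.
  + by move=> R; apply: tauI_greatest.
Qed.
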